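(* Let $n\geq1$ and $\mu\vdash 2n$. Then for every $\lambda\vdash n$, $$\hat{\phi}^{2\lambda}_{\mu}=\sum_{\tau\vdash n}m(\mu,2\tau)\,\hat{\theta}^{2\lambda}_{2\tau}.$$ Equivalently, writing $\hat{\phi}_\mu=(\hat{\phi}^{2\lambda}_\mu)_{\lambda\vdash n}$ and $m(\mu)=(m(\mu,2\tau))_{\tau\vdash n}$ as column vectors, $\hat{\phi}_\mu=\hat{\Theta}(2n)\,m(\mu)$.
   Context: Let $K_{2n}$ be the complete graph on $\{1,\ldots,2n\}$, ${\cal M}_{2n}$ its set of perfect matchings, and $[i,j]$ the edge joining $i,j$. For $A,B\in{\cal M}_{2n}$, $d(A,B)$ is the partition of $2n$ whose parts are the numbers of vertices of the connected components of the spanning subgraph with edge set $A\cup B$; it has the form $2\mu$ with $\mu\vdash n$. The group $S_{2n}$ acts on ${\cal M}_{2n}$ by relabelling vertices. For $\mu\vdash n$, $N_{2\mu}(A)=\sum_{B:\,d(A,B)=2\mu}B$ defines an element of ${\cal B}_{2n}=\mathrm{End}_{S_{2n}}({\mathbb C}[{\cal M}_{2n}])$. It is known that ${\mathbb C}[{\cal M}_{2n}]\cong\bigoplus_{\lambda\vdash n}V^{2\lambda}$ multiplicity-free, where $V^\nu$ is the irreducible $S_{2n}$-module indexed by $\nu$ and $2\lambda$ doubles the row lengths of $\lambda$. The scalar by which $N_{2\tau}$ acts on $V^{2\lambda}$ is $\hat{\theta}^{2\lambda}_{2\tau}$, and $\hat{\Theta}(2n)=(\hat{\theta}^{2\lambda}_{2\tau})_{\lambda,\tau\vdash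 n}$. For $\nu,\rho\vdash 2n$, $\hat{\phi}^\nu_\rho$ is the scalar by which the class sum of permutations of cycle type $\rho$ acts on $V^\nu$. Let $I=\{[1,n+1],[2,n+2],\ldots,[n,2n]\}$. For $\rho\vdash 2n$ and $\tau\vdash n$, $m(\rho,2\tau)$ is the number of permutations in $S_{2n}$ of cycle type $\rho$ sending $I$ to $A$, where $A\in{\cal M}_{2n}$ is any matching with $d(I,A)=2\tau$; this number does not depend on the choice of such $A$. *)

From mathcomp Require Import all_boot all_order all_algebra perm algC.
Set Implicit Arguments. Unset Strict Implicit. Unset Printing Implicit Defensive.
Import GRing.Theory Num.Theory.
Local Open Scope ring_scope.

Definition is_partition (n : nat) (s : seq nat) : bool :=
  [&& sorted geq s, all (fun x => 0 < x)%N s & sumn s == n].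

Fixpoint allseq (L m : nat) : seq (seq nat) :=
  [::] :: (if L is L'.+1 then [seq x :: s | x <- iota 0 m, s <- allseq L' m] else [::]).

Definition parts (n : nat) : seq (seq nat) :=
  [seq s <- allseq n n.+1 | is_partition n s].

Definition dbl (s : seq nat) : seq nat := map (fun x => x.*2) s.

Section Matchings.
Variable n : nat.
Notation T := 'I_(n.*2).

Definition is_pm (A : {set {set T}}) : bool :=
  partition A [set: T] && [forall X in A, #|X| == 2].

Definition PM := {A : {set {set T}} | is_pm A}.

Definition mact (s : {perm T}) (A : {set {set T}}) : {set {set T}} :=
  [set [set s x | x in X] | X : {set T} in A].

Definition adjAB (A B : {set {set T}}) : rel T :=
  [rel x y | [exists X in A :|: B, (x \in X) && (y \in X)]].
Definition comps (A B : {set {set T}}) : {set {set T}} :=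
  [set [set y | connect (adjAB A B) x y] | x : T].
Definition dist (A B : {set {set T}}) : seq nat :=
  sort geq [seq #|C| | C : {set T} <- enum (comps A B)].

Definition cycle_type (s : {perm T}) : seq nat :=
  sort geq [seq #|X| | X : {set T} <- enum (porbits s)].

(* I = {[1,n+1],...,[n,2n]} (0-based: {i, i+n}) *)
Definition Imatch : {set {set T}} :=
  [set X : {set T} | [exists x : T, exists y : T, (val y == val x + n)%N && (X == [set x; y])]].

(* m(rho, 2 tau): number of sigma of type rho with sigma(I) = A, where A is
   a (chosen) perfect matching with d(I,A) = 2 tau. *)
Definition mcount (rho tau : seq nat) : nat :=
  match [pick A : {set {set T}} | is_pm A && (dist Imatch A == dbl tau)] with
  | Some A => #|[set s : {perm T} | (cycle_type s == rho) && (mact s Imatch == A)]|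
  | None => 0
  end.

(* C[M_2n] as row vectors indexed by PM; operators act on the right. *)
Definition dimM := #|{: PM}|.

Definition permM (s : {perm T}) : 'M[algC]_dimM :=
  \matrix_(i, j) (mact s (val (enum_val i)) == val (enum_val j))%:R.

Definition classsum (rho : seq nat) : 'M[algC]_dimM :=
  \sum_(s : {perm T} | cycle_type s == rho) permM s.

Definition Nop (tau : seq nat) : 'M[algC]_dimM :=
  \matrix_(i, j) (dist (val (enum_val i)) (val (enum_val j)) == dbl tau)%:R.

Definition invariant (W : 'M[algC]_dimM) : Prop :=
  forall s : {perm T}, (W *m permM s <= W)%MS.

Definition irr_submod (W : 'M[algC]_dimM) : Prop :=
  W != 0 /\ invariant W /\
  forall U : 'M[algC]_dimM, (U <= W)%MS -> invariant U -> U = 0 \/ (U == W)%MS.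

End Matchings.

From mathcomp Require Import all_boot all_order all_algebra perm algC zify.
Import GRing.Theory Num.Theory.
Set Implicit Arguments. Unset Strict Implicit. Unset Printing Implicit Defensive.

(* The (A, B) entry of the class sum of type mu acting on C[M_2n] is the number of
   permutations of type mu carrying A to B.  Conjugation shows that this number only
   depends on the S_2n-orbit of the pair (A, B), and these orbits are classified by
   d(A, B): writing A and B as fixed-point-free involutions a and b, each component of
   A u B is a cycle alternating between A- and B-edges, on which a and b act as the two
   reflections of a dihedral group, so components of equal size can be identified
   compatibly with a and b.  Hence the class sum is the sum of m(mu, 2tau) N_2tau, and
   evaluating both sides on a nonzero vector of W compares the eigenvalues. *)

Section PerfectMatchings.
Variable n : nat.
Local Notation T := 'I_(n.*2).

Definition pairing (f : T -> T) : {set {set T}} := [set [set x; f x] | x : T].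

Lemma pairing_mem f x : [set x; f x] \in pairing f.
Proof. exact: (@imset_f _ _ (fun x => [set x; f x])). Qed.

Section Involution.
Variable a : T -> T.
Hypotheses (aK : involutive a) (a_neq : forall x, a x != x).

Lemma pairing_block x z : z \in [set x; a x] -> [set x; a x] = [set z; a z].
Proof. by case/set2P=> -> //; rewrite aK setUC. Qed.

Lemma is_pm_pairing : is_pm (pairing a).
Proof.
apply/andP; split; last first.
  by apply/forall_inP=> _ /imsetP[x _ ->]; rewrite cards2 (eq_sym x) a_neq.
apply/and3P; split.
- apply/eqP/setP=> y; rewrite inE; apply/bigcupP.
  by exists [set y; a y]; rewrite ?pairing_mem ?set21.
- apply/trivIsetP=> _ _ /imsetP[x _ ->] /imsetP[y _ ->].
  apply: contraR; rewrite -setI_eq0 => /set0Pn[z /setIP[zx zy]].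
  by rewrite (pairing_block zx) (pairing_block zy).
- by apply/imsetP=> -[x _] /setP/(_ x); rewrite inE set21.
Qed.

End Involution.

Definition partner (A : {set {set T}}) x :=
  odflt x [pick y | (y != x) && ([set x; y] \in A)].

Section Partner.
Variable A : {set {set T}}.
Hypothesis pmA : is_pm A.

Lemma pm_block_eq X Y x : X \in A -> Y \in A -> x \in X -> x \in Y -> X = Y.
Proof.
case/andP: pmA => /and3P[_ /trivIsetP tA _] _ XA YA xX xY.
apply/eqP; apply: contraT => /(tA X Y XA YA); rewrite -setI_eq0.
by move/eqP/setP/(_ x); rewrite !inE xX xY.
Qed.

Lemma partnerP x : (partner A x != x) && ([set x; partner A x] \in A).
Proof.
rewrite /partner; case: pickP => [y -> //|none].
case/andP: pmA => /and3P[/eqP coverA _ _] /forall_inP card2.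
have /bigcupP[X XA xX] : x \in cover A by rewrite coverA inE.
suff [y yx xyA] : exists2 y, y != x & [set x; y] \in A.
  by have := none y; rewrite yx xyA.
have /cards2P[u [v [uv defX]]] := card2 X XA.
move: xX XA; rewrite defX => /set2P[] -> XA.
  by exists v; rewrite 1?eq_sym.
by exists u; rewrite 1?setUC.
Qed.

Lemma pm_partner_uniq x y z : [set x; y] \in A -> [set x; z] \in A -> y != x -> y = z.
Proof.
move=> xyA xzA yx; have := set22 x y.
by rewrite (pm_block_eq xyA xzA (set21 _ _) (set21 _ _)) => /set2P[/eqP|]; rewrite ?(negbTE yx).
Qed.

Lemma partnerK : involutive (partner A).
Proof.
move=> x; case/andP: (partnerP x) => px pxA.
case/andP: (partnerP (partner A x)) => ppx ppxA.
by apply/esym/(pm_partner_uniq (x := partner A x)); rewrite // 1?setUC // eq_sym.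
Qed.

Lemma pairing_partner : A = pairing (partner A).
Proof.
case/andP: pmA => _ /forall_inP card2.
apply/setP=> X; apply/idP/imsetP=> [XA|[x _ ->]]; last by case/andP: (partnerP x).
have /cards2P[u [v [uv defX]]] := card2 X XA; exists u => //.
case/andP: (partnerP u) => pu puA.
by rewrite defX (@pm_partner_uniq u v (partner A u)) // -?defX // eq_sym.
Qed.

End Partner.

Lemma is_pm_involution A : is_pm A ->
  exists a : T -> T, [/\ involutive a, forall x, a x != x & A = pairing a].
Proof.
move=> pmA; exists (partner A); split; [exact: partnerK | | exact: pairing_partner].
by move=> x; case/andP: (partnerP pmA x).
Qed.

End PerfectMatchings.

Section IterMod.
Variables (T : finType) (f : T -> T).
Hypothesis f_inj : injective f.

Lemma iter_inj m : injective (iter m f).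
Proof. by elim: m => //= m IHm x y /f_inj/IHm. Qed.

Lemma iter_mod_order m x : iter m f x = iter (m %% order f x) f x.
Proof.
rewrite {1}(divn_eq m (order f x)) addnC iterD; congr iter.
by elim: (m %/ order f x) => // q IHq; rewrite mulSn iterD IHq (iter_order f_inj).
Qed.

End IterMod.

Section Representative.
Variable T : finType.

Definition rep (C : {set T}) (d : T) := odflt d [pick z in C].

Lemma rep_in (C : {set T}) (d e : T) : e \in C -> rep C d \in C.
Proof. by rewrite /rep; case: pickP => [//|none]; rewrite none. Qed.

Lemma rep_indep (C : {set T}) (d1 d2 e : T) : e \in C -> rep C d1 = rep C d2.
Proof. by rewrite /rep; case: pickP => [//|none]; rewrite none. Qed.

End Representative.

Lemma sort_geqP (s1 s2 : seq nat) : reflect (sort geq s1 = sort geq s2) (perm_eq s1 s2).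
Proof.
apply: perm_sortP; first by move=> x y; apply: leq_total.
  by move=> y x z /= yx zy; apply: leq_trans zy yx.
by move=> x y /andP[yx xy]; apply/anti_leq/andP; split.
Qed.

(* Pair off the items of [P] and [P'] by their ranks in the lists sorted by [f]. *)
Lemma match_by_size (U : finType) (f : U -> nat) (x0 : U) (P P' : {set U}) :
  perm_eq [seq f x | x <- enum P] [seq f x | x <- enum P'] ->
  exists h : U -> U, [/\ {in P &, injective h},
    {in P, forall x, h x \in P'} & {in P, forall x, f (h x) = f x}].
Proof.
move=> PP'; set L := sort (relpre f geq) (enum P); set L' := sort (relpre f geq) (enum P').
have fLL : map f L = map f L' by rewrite /L /L' -!sort_map; apply/sort_geqP.
have sizeL : size L' = size L by rewrite -(size_map f L) fLL size_map.
have memL x : (x \in L) = (x \in P) by rewrite mem_sort mem_enum.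
have xL x : x \in P -> index x L < size L by rewrite index_mem memL.
exists (fun x => nth x0 L' (index x L)); split.
- move=> x y xP yP /eqP; rewrite nth_uniq ?sort_uniq ?enum_uniq ?sizeL ?xL //.
  by move=> /eqP/(congr1 (nth x0 L)); rewrite !nth_index ?memL.
- by move=> x xP; rewrite -mem_enum -(mem_sort (relpre f geq)) mem_nth ?sizeL ?xL.
- move=> x xP; rewrite -(nth_map x0 0) ?sizeL ?xL // -fLL (nth_map x0) ?xL //.
  by rewrite nth_index ?memL.
Qed.

Section TwoPairings.
Variable n : nat.
Local Notation T := 'I_(n.*2).
Variables a b : T -> T.
Hypotheses (aK : involutive a) (bK : involutive b).
Hypotheses (a_neq : forall x, a x != x) (b_neq : forall x, b x != x).

Local Notation adj := (adjAB (pairing a) (pairing b)).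

Definition rho x := a (b x).

Lemma rho_inj : injective rho.
Proof. by move=> x y /(inv_inj aK)/(inv_inj bK). Qed.

Lemma adj_pairing x y : adj x y = [|| y == x, y == a x | y == b x].
Proof.
apply/existsP/idP=> [[X /andP[]]|].
  rewrite inE => /orP[]/imsetP[z _ ->] /andP[xX].
    by rewrite (pairing_block aK xX) => /set2P[]->; rewrite eqxx ?orbT.
  by rewrite (pairing_block bK xX) => /set2P[]->; rewrite eqxx ?orbT.
case/or3P=> /eqP->.
- by exists [set x; a x]; rewrite in_setU pairing_mem set21.
- by exists [set x; a x]; rewrite in_setU pairing_mem set21 set22.
- by exists [set x; b x]; rewrite in_setU pairing_mem orbT set21 set22.
Qed.

Lemma adj_sym : symmetric adj.
Proof.
move=> x y; rewrite !adj_pairing (eq_sym x y) (eq_sym x (a y)) (eq_sym x (b y)).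
by rewrite (can2_eq aK aK) (can2_eq bK bK).
Qed.

Lemma connect_sym_pairing : connect_sym adj.
Proof. exact: sym_connect_sym adj_sym. Qed.

Lemma iter_rho_a m x : iter m rho (a (iter m rho x)) = a x.
Proof.
elim: m x => // m IHm x.
by rewrite iterSr iterS /rho aK bK -/(rho _) IHm.
Qed.

(* If [a y] were [rho^m y], then [rho^(m/2)] would conjugate [a] or [b] into a map
   fixing a point, according to the parity of [m]. *)
Lemma rho_orbit_a x y : fconnect rho x y -> ~~ fconnect rho x (a y).
Proof.
move=> xy; apply/negP=> xay.
have /iter_findex : fconnect rho y (a y).
  by apply: connect_trans xay; rewrite (fconnect_sym rho_inj).
move: (findex _ _ _) => m def_ay; have := iter_rho_a m./2 y; rewrite -def_ay.
have : m = m./2 + m./2.+1 \/ m = m./2 + m./2.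
  by case: (odd m) (odd_double_half m) => /= <-; [left | right]; lia.
move: m./2 => h [->|->]; rewrite iterD ?iterS => /(iter_inj rho_inj).
  by move/(inv_inj aK)/eqP; rewrite eq_sym (negbTE (b_neq _)).
by move/eqP; rewrite (negbTE (a_neq _)).
Qed.

Lemma connect_pairing x y : connect adj x y = fconnect rho x y || fconnect rho x (a y).
Proof.
have adj_rho u v : fconnect rho u v -> connect adj u v.
  case/connectP=> p + ->; elim: p u => [|z p IHp] u /=; first by rewrite connect0.
  case/andP=> /eqP <- /IHp; apply: connect_trans.
  by apply: (connect_trans (y := b u)); apply: connect1; rewrite adj_pairing eqxx ?orbT.
apply/idP/idP=> [|/orP[/adj_rho //|/adj_rho xay]]; last first.
  by apply: connect_trans xay (connect1 _); rewrite adj_pairing aK eqxx ?orbT.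
case/connectP=> p + ->; elim/last_ind: p => [|p z IHp]; first by rewrite connect0.
rewrite rcons_path last_rcons => /andP[/IHp + ].
set u := last x p; rewrite adj_pairing => xu /or3P[]/eqP->; first by [].
  by rewrite aK orbC.
case/orP: xu => xu; apply/orP; [right|left].
  exact: connect_trans xu (fconnect1 rho u).
by rewrite (same_fconnect1_r rho_inj) /rho bK.
Qed.

Definition component x := [set y | connect adj x y].

Lemma mem_comps y : component y \in comps (pairing a) (pairing b).
Proof. by apply/imsetP; exists y. Qed.

Lemma componentE x : component x = [set y | fconnect rho x y || fconnect rho x (a y)].
Proof. by apply/setP=> y; rewrite !inE connect_pairing. Qed.

Lemma mem_component x : x \in component x.
Proof. by rewrite inE connect0. Qed.

Lemma component_eq x y : y \in component x -> component y = component x.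
Proof.
rewrite inE => xy; apply/setP=> z; rewrite !inE.
by rewrite (same_connect connect_sym_pairing xy).
Qed.

Lemma component_a x y : y \in component x -> a y \in component x.
Proof.
by rewrite !inE => xy; apply: connect_trans xy (connect1 _); rewrite adj_pairing eqxx orbT.
Qed.

Lemma component_b x y : y \in component x -> b y \in component x.
Proof.
by rewrite !inE => xy; apply: connect_trans xy (connect1 _); rewrite adj_pairing eqxx !orbT.
Qed.

Lemma component_aE y : component (a y) = component y.
Proof. exact/component_eq/component_a/mem_component. Qed.

Lemma component_bE y : component (b y) = component y.
Proof. exact/component_eq/component_b/mem_component. Qed.

Lemma component_iter_rho x m : iter m rho x \in component x.
Proof. by elim: m => [|m IHm]; rewrite ?mem_component //= /rho component_a ?component_b. Qed.

Lemma card_component x : #|component x| = (order rho x).*2.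
Proof.
set F := [set y | fconnect rho x y].
have -> : component x = F :|: a @: F.
  apply/setP=> y; rewrite componentE !inE; congr orb; apply/idP/imsetP.
    by exists (a y); rewrite ?inE ?aK.
  by case=> z; rewrite inE => xz ->; rewrite aK.
have disjF : F :&: a @: F = set0.
  apply/setP=> y; rewrite !inE; apply/andP=> -[xy /imsetP[z]].
  by rewrite inE => xz defy; move/rho_orbit_a: xz; rewrite -defy xy.
rewrite cardsU disjF cards0 subn0 card_imset ?addnn; last exact: inv_inj.
by congr double; apply: eq_card => y; rewrite inE.
Qed.

Definition base y := rep (component y) y.

Lemma base_component y : component (base y) = component y.
Proof. exact/component_eq/(rep_in _ (mem_component y)). Qed.

Lemma base_eq y z : component y = component z -> base y = base z.
Proof. by rewrite /base => ->; apply: rep_indep (mem_component z). Qed.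

Lemma base_a y : base (a y) = base y.
Proof. exact/base_eq/component_aE. Qed.

Lemma base_b y : base (b y) = base y.
Proof. exact/base_eq/component_bE. Qed.

(* Every [y] is [rho^i (base y)] or [a (rho^i (base y))], for a unique [side] and
   a unique [pos] [i] below the order of [rho] at [base y]. *)
Definition side y := ~~ fconnect rho (base y) y.
Definition pos y := findex rho (base y) (if side y then a y else y).
Definition at_coord x (e : bool) i := (if e then a else id) (iter i rho x).

Lemma at_coord_component x e i : at_coord x e i \in component x.
Proof. by case: e; [apply: component_a|]; apply: component_iter_rho. Qed.

Lemma coordK y : y = at_coord (base y) (side y) (pos y).
Proof.
have := mem_component y; rewrite -base_component componentE inE /at_coord /pos /side.
by case: (boolP (fconnect rho (base y) y)) => [yc _|_ ay] /=; rewrite iter_findex ?aK.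
Qed.

Lemma pos_lt y : pos y < order rho (base y).
Proof.
have := mem_component y; rewrite -base_component componentE inE /pos /side.
by case: (boolP (fconnect rho (base y) y)) => [yc _|_ ay] /=; rewrite findex_max.
Qed.

Lemma at_coord_inj x e1 i1 e2 i2 : i1 < order rho x -> i2 < order rho x ->
  at_coord x e1 i1 = at_coord x e2 i2 -> e1 = e2 /\ i1 = i2.
Proof.
move=> lt_i1 lt_i2; rewrite /at_coord.
have iter_inj_lt : iter i1 rho x = iter i2 rho x -> i1 = i2.
  by move=> E; rewrite -(findex_iter lt_i1) E findex_iter.
case: e1; case: e2 => /= E.
- by split; last exact/iter_inj_lt/(inv_inj aK).
- by have := rho_orbit_a (fconnect_iter rho i1 x); rewrite E fconnect_iter.
- by have := rho_orbit_a (fconnect_iter rho i2 x); rewrite -E fconnect_iter.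
- by split; last exact: iter_inj_lt.
Qed.

Lemma coord_unique y e i : i < order rho (base y) ->
  y = at_coord (base y) e i -> side y = e /\ pos y = i.
Proof.
move=> lt_i def_y.
by have [-> ->] := at_coord_inj lt_i (pos_lt y) (etrans (esym def_y) (coordK y)).
Qed.

Lemma coord_a y : side (a y) = ~~ side y /\ pos (a y) = pos y.
Proof.
apply: coord_unique; rewrite base_a ?pos_lt // {1}[y]coordK /at_coord.
by case: side => //=; rewrite aK.
Qed.

Lemma coord_b y : side y = false ->
  side (b y) = true /\ pos (b y) = (pos y).+1 %% order rho (base y).
Proof.
move=> side_y; apply: coord_unique; rewrite base_b ?ltn_pmod ?order_gt0 //.
rewrite /at_coord /= -(iter_mod_order rho_inj) iterS.
have /= -> : at_coord (base y) false (pos y) = y by rewrite -side_y -coordK.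
by rewrite /rho aK.
Qed.

Lemma side_b y : side y -> side (b y) = false.
Proof.
have := mem_component y; rewrite -base_component componentE inE /side base_b.
case/orP=> [yc /negP[] // | ay _].
by rewrite (same_fconnect1_r rho_inj) /rho bK ay.
Qed.

End TwoPairings.

Section Conjugacy.
Variable n : nat.
Local Notation T := 'I_(n.*2).
Variables a b a' b' : T -> T.
Hypotheses (aK : involutive a) (bK : involutive b).
Hypotheses (a_neq : forall x, a x != x) (b_neq : forall x, b x != x).
Hypotheses (aK' : involutive a') (bK' : involutive b').
Hypotheses (a'_neq : forall x, a' x != x) (b'_neq : forall x, b' x != x).
Variable h : {set T} -> {set T}.
Hypothesis h_inj : {in comps (pairing a) (pairing b) &, injective h}.
Hypothesis h_comps :
  {in comps (pairing a) (pairing b), forall C, h C \in comps (pairing a') (pairing b')}.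
Hypothesis h_card : {in comps (pairing a) (pairing b), forall C, #|h C| = #|C|}.

Definition image_base y := rep (h (component a b y)) y.

Definition conj_map y := at_coord a' b' (image_base y) (side a b y) (pos a b y).

Lemma component_image_base y : component a' b' (image_base y) = h (component a b y).
Proof.
have /imsetP[w _ def_hC] := h_comps (mem_comps a b y).
rewrite /image_base def_hC; apply: (component_eq aK' bK').
exact: rep_in (mem_component a' b' w).
Qed.

Lemma image_base_eq y z : component a b y = component a b z -> image_base y = image_base z.
Proof.
move=> eq_yz; rewrite /image_base eq_yz; apply: rep_indep.
by rewrite -component_image_base; apply: mem_component.
Qed.

Lemma order_image_base y : order (rho a' b') (image_base y) = order (rho a b) (base a b y).
Proof.
apply: double_inj; rewrite -(card_component aK' bK' a'_neq b'_neq) -(card_component aK bK a_neq b_neq).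
by rewrite component_image_base h_card ?mem_comps // base_component.
Qed.

Lemma conj_map_a y : conj_map (a y) = a' (conj_map y).
Proof.
rewrite /conj_map (image_base_eq (component_aE aK bK y)).
by have [-> ->] := coord_a aK bK a_neq b_neq y; rewrite /at_coord; case: side; rewrite /= ?aK'.
Qed.

Lemma conj_map_b y : conj_map (b y) = b' (conj_map y).
Proof.
wlog side_y : y / side a b y = false.
  move=> IH; case: (boolP (side a b y)) => [/(side_b aK bK) side_by|/negbTE]; last exact: IH.
  by apply: (canRL bK'); rewrite -IH // bK.
rewrite /conj_map (image_base_eq (component_bE aK bK y)).
have [-> ->] := coord_b aK bK a_neq b_neq side_y; rewrite side_y /at_coord /=.
by rewrite -order_image_base -(iter_mod_order (rho_inj aK' bK')) iterS /rho aK'.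
Qed.

Lemma conj_map_inj : injective conj_map.
Proof.
have component_conj_map y : component a' b' (conj_map y) = h (component a b y).
  by rewrite -component_image_base; apply/(component_eq aK' bK')/at_coord_component.
move=> y z eq_yz.
have eq_comp : component a b y = component a b z.
  by apply: h_inj; rewrite ?mem_comps // -!component_conj_map eq_yz.
have lt_pos x : pos a b x < order (rho a' b') (image_base x).
  by rewrite order_image_base (pos_lt aK bK).
move: eq_yz; rewrite /conj_map (image_base_eq eq_comp).
case/(at_coord_inj aK' bK' a'_neq b'_neq _ (lt_pos z)) => [|eq_side eq_pos].
  by rewrite -(image_base_eq eq_comp) lt_pos.
by rewrite (coordK aK bK y) (coordK aK bK z) eq_side eq_pos (base_eq eq_comp).
Qed.

End Conjugacy.

Lemma conj_pairings n (a b a' b' : 'I_(n.*2) -> 'I_(n.*2)) :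
  involutive a -> involutive b -> (forall x, a x != x) -> (forall x, b x != x) ->
  involutive a' -> involutive b' -> (forall x, a' x != x) -> (forall x, b' x != x) ->
  dist (pairing a) (pairing b) = dist (pairing a') (pairing b') ->
  exists G : {perm 'I_(n.*2)},
    (forall x, G (a x) = a' (G x)) /\ (forall x, G (b x) = b' (G x)).
Proof.
move=> aK bK a_neq b_neq aK' bK' a'_neq b'_neq /sort_geqP.
case/(match_by_size set0) => h [h_inj h_comps h_card].
exists (perm (conj_map_inj aK bK a_neq b_neq aK' bK' a'_neq b'_neq h_inj h_comps h_card)).
by split=> x; rewrite !permE; [apply: conj_map_a | apply: conj_map_b].
Qed.

Section Relabelling.
Variable T : finType.

Lemma imset_perm_reindex (U : finType) (F : T -> U) (G : {perm T}) :
  [set F x | x : T] = [set F (G x) | x : T].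
Proof.
apply/setP=> X; apply/imsetP/imsetP=> -[x _ ->]; last by exists (G x).
by exists ((G^-1)%g x); rewrite ?permKV.
Qed.

Lemma sort_card_imset_perm (G : {perm T}) (P : {set {set T}}) :
  sort geq [seq #|X| | X : {set T} <- enum [set G @: X | X : {set T} in P]] =
  sort geq [seq #|X| | X : {set T} <- enum P].
Proof.
apply/sort_geqP.
have -> : [seq #|X| | X : {set T} <- enum P] =
          [seq #|X| | X : {set T} <- [seq G @: X | X : {set T} <- enum P]].
  by rewrite -map_comp; apply: eq_map => X /=; rewrite card_imset //; apply: perm_inj.
apply: perm_map; apply: uniq_perm; rewrite ?map_inj_uniq ?enum_uniq //.
  exact: imset_inj (@perm_inj _ G).
by move=> X; rewrite mem_enum; apply/imsetP/mapP=> -[Y]; rewrite ?mem_enum => YP ->;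
  exists Y; rewrite ?mem_enum.
Qed.

Lemma connect_perm (e e' : rel T) (G : {perm T}) :
  (forall u v, e' (G u) (G v) = e u v) -> forall u v, connect e' (G u) (G v) = connect e u v.
Proof.
have connect_map (e1 e2 : rel T) (G1 : {perm T}) :
    (forall u v, e2 (G1 u) (G1 v) = e1 u v) ->
    forall u v, connect e1 u v -> connect e2 (G1 u) (G1 v).
  move=> eG u v /connectP[p p_path ->]; apply/connectP.
  exists (map G1 p); last by rewrite last_map.
  by elim: p u p_path => //= z p IHp u /andP[uz /IHp->]; rewrite eG uz.
move=> eG u v; apply/idP/idP; last exact: connect_map.
have eGV u1 v1 : e ((G^-1)%g u1) ((G^-1)%g v1) = e' u1 v1 by rewrite -eG !permKV.
by move/(connect_map _ _ _ eGV); rewrite !permK.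
Qed.

End Relabelling.

Section RelabellingMatchings.
Variable n : nat.
Local Notation T := 'I_(n.*2).

Lemma mact_pairing (G : {perm T}) (a a' : T -> T) :
  (forall x, G (a x) = a' (G x)) -> mact G (pairing a) = pairing a'.
Proof.
move=> Ga; rewrite /mact /pairing -imset_comp [RHS](imset_perm_reindex _ G).
by apply: eq_imset => x /=; rewrite imsetU1 imset_set1 Ga.
Qed.

Lemma mactM (s t : {perm T}) (A : {set {set T}}) : mact (s * t)%g A = mact t (mact s A).
Proof.
rewrite /mact -imset_comp; apply: eq_imset => X /=.
by rewrite -imset_comp; apply: eq_imset => x; rewrite permM.
Qed.

Lemma mact1 (A : {set {set T}}) : mact 1%g A = A.
Proof. by rewrite /mact -[RHS]imset_id; apply: eq_imset => X; rewrite imset_perm1. Qed.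

Lemma mactK (G : {perm T}) (A : {set {set T}}) : mact G^-1%g (mact G A) = A.
Proof. by rewrite -mactM mulgV mact1. Qed.

Lemma is_pm_mact (G : {perm T}) (A : {set {set T}}) : is_pm A -> is_pm (mact G A).
Proof.
case/is_pm_involution=> b [bK b_neq ->].
pose b' x := G (b ((G^-1)%g x)).
have Gb x : G (b x) = b' (G x) by rewrite /b' permK.
rewrite (mact_pairing Gb); apply: is_pm_pairing => [x|x].
  by rewrite /b' permK bK permKV.
by rewrite /b' -(inj_eq (@perm_inj _ G^-1%g)) permK b_neq.
Qed.

Lemma adjAB_mact (G : {perm T}) (A B : {set {set T}}) u v :
  adjAB (mact G A) (mact G B) (G u) (G v) = adjAB A B u v.
Proof.
rewrite /adjAB /= /mact -imsetU.
apply/existsP/existsP=> [[X /andP[/imsetP[Y YAB ->]]]|[Y /andP[YAB uvY]]].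
  by rewrite !mem_imset; [exists Y; rewrite YAB | apply: perm_inj..].
by exists (G @: Y); rewrite imset_f // !mem_imset //; apply: perm_inj.
Qed.

Lemma comps_mact (G : {perm T}) (A B : {set {set T}}) :
  comps (mact G A) (mact G B) = [set G @: C | C : {set T} in comps A B].
Proof.
rewrite /comps (imset_perm_reindex _ G) -imset_comp; apply: eq_imset => x /=.
apply/setP=> y; rewrite -[y](permKV G) mem_imset ?inE; last exact: perm_inj.
by rewrite (connect_perm (adjAB_mact G A B)).
Qed.

Lemma dist_mact (G : {perm T}) (A B : {set {set T}}) : dist (mact G A) (mact G B) = dist A B.
Proof. by rewrite /dist comps_mact sort_card_imset_perm. Qed.

Lemma porbitJ (s G : {perm T}) x : porbit (s ^ G)%g (G x) = G @: porbit s x.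
Proof.
apply/setP=> y; rewrite -[y](permKV G) mem_imset; last exact: perm_inj.
apply/porbitP/porbitP=> -[i def_y]; exists i.
  by move: def_y; rewrite -conjXg permJ => /perm_inj.
by rewrite -conjXg permJ def_y.
Qed.

Lemma cycle_typeJ (s G : {perm T}) : cycle_type (s ^ G)%g = cycle_type s.
Proof.
rewrite /cycle_type /porbits (imset_perm_reindex _ G).
have -> : [set porbit (s ^ G)%g (G x) | x : T] = [set G @: X | X : {set T} in porbit s @: T].
  by rewrite -imset_comp; apply: eq_imset => x; rewrite /= porbitJ.
by rewrite sort_card_imset_perm.
Qed.

Definition transporters (mu : seq nat) (A B : {set {set T}}) : {set {perm T}} :=
  [set s : {perm T} | (cycle_type s == mu) && (mact s A == B)].

Lemma card_transporters_mact mu (G : {perm T}) (A B : {set {set T}}) :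
  #|transporters mu (mact G A) (mact G B)| = #|transporters mu A B|.
Proof.
have le_card (H : {perm T}) (C D : {set {set T}}) :
    #|transporters mu C D| <= #|transporters mu (mact H C) (mact H D)|.
  rewrite -(card_imset _ (conjg_inj H)); apply: subset_leq_card.
  apply/subsetP=> t /imsetP[s]; rewrite /transporters !inE => /andP[/eqP type_s /eqP sC] ->.
  by rewrite cycle_typeJ type_s eqxx /conjg !mactM mactK sC eqxx.
apply/eqP; rewrite eqn_leq le_card andbT.
by have := le_card G^-1%g (mact G A) (mact G B); rewrite !mactK.
Qed.

End RelabellingMatchings.

Lemma mem_allseq L m s : size s <= L -> all (fun x => x < m) s -> s \in allseq L m.
Proof.
elim: L s => [|L IHL] [|x s] //= size_s /andP[lt_x lt_s].
by rewrite in_cons /=; apply: (allpairs_f (fun x s => x :: s)); rewrite ?mem_iota ?IHL.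
Qed.

Lemma allseq_uniq L m : uniq (allseq L m).
Proof.
elim: L => //= L IHL; apply/andP; split.
  by apply/negP=> /allpairsP[[x s] [_ _]].
by apply: allpairs_uniq; rewrite ?iota_uniq // => -[x1 s1] [x2 s2] _ _ /= [-> ->].
Qed.

Lemma parts_uniq n : uniq (parts n).
Proof. exact/filter_uniq/allseq_uniq. Qed.

Lemma dbl_inj : injective dbl.
Proof. exact/inj_map/double_inj. Qed.

Lemma sumn_dbl s : sumn (dbl s) = (sumn s).*2.
Proof. by elim: s => //= x s ->; rewrite doubleD. Qed.

Lemma size_le_sumn s : all (fun x => 0 < x) s -> size s <= sumn s.
Proof. by elim: s => //= x s IHs /andP[x_gt0 /IHs]; lia. Qed.

Lemma leq_sumn s x : x \in s -> x <= sumn s.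
Proof. by elim: s => //= y s IHs; rewrite in_cons => /orP[/eqP->|/IHs]; lia. Qed.

Lemma halve_partition n d : sorted geq d -> sumn d = n.*2 ->
  (forall c, c \in d -> exists2 k, 0 < k & c = k.*2) ->
  exists2 tau, tau \in parts n & dbl tau = d.
Proof.
move=> sorted_d sum_d even_d.
have dblK : dbl (map half d) = d.
  rewrite /dbl -map_comp -[RHS]map_id; apply/eq_in_map => c /even_d[k _ ->] /=.
  by rewrite doubleK.
have pos_d : all (fun x => 0 < x) (map half d).
  by apply/allP=> _ /mapP[c /even_d[k k_gt0 ->] ->]; rewrite doubleK.
have sum_half : sumn (map half d) = n by apply: double_inj; rewrite -sumn_dbl dblK.
exists (map half d) => //; rewrite mem_filter; apply/andP; split.
  apply/and3P; split; rewrite ?sum_half //= sorted_map.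
  by apply: sub_sorted sorted_d => x y /=; apply: half_leq.
apply: mem_allseq; first by rewrite -sum_half size_le_sumn.
by apply/allP=> x /leq_sumn; rewrite sum_half ltnS.
Qed.

Section MatchingPairs.
Variable n : nat.
Local Notation T := 'I_(n.*2).

Lemma partition_comps (a b : T -> T) : involutive a -> involutive b ->
  partition (comps (pairing a) (pairing b)) [set: T].
Proof.
move=> aK bK.
have -> : comps (pairing a) (pairing b) =
    equivalence_partition (connect (adjAB (pairing a) (pairing b))) [set: T].
  by apply/setP=> X; apply/imsetP/imsetP=> -[x _ ->]; exists x; rewrite ?inE //;
    apply/setP=> y; rewrite !inE.
apply: equivalence_partitionP => x y z _ _ _; split; first exact: connect0.
by move=> xy; apply: (same_connect (connect_sym_pairing aK bK) xy).
Qed.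

Lemma sumn_dist (a b : T -> T) : involutive a -> involutive b ->
  sumn (dist (pairing a) (pairing b)) = n.*2.
Proof.
move=> aK bK; rewrite /dist (perm_sumn (permEl (perm_sort _ _))) sumnE big_map big_enum.
by rewrite -(card_partition (partition_comps aK bK)) cardsT card_ord.
Qed.

Lemma dist_parts (A B : {set {set T}}) : is_pm A -> is_pm B ->
  exists2 tau, tau \in parts n & dist A B = dbl tau.
Proof.
case/is_pm_involution=> a [aK a_neq ->] /is_pm_involution[b [bK b_neq ->]].
have [|||tau tau_parts <-] := @halve_partition n (dist (pairing a) (pairing b)).
- exact: sort_sorted (fun x y => leq_total y x) _.
- exact: sumn_dist.
- move=> c; rewrite mem_sort => /mapP[_ /[!mem_enum] /imsetP[x _ ->] ->].
  by exists (order (rho a b) x); rewrite ?order_gt0 ?(card_component aK bK a_neq b_neq).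
by exists tau.
Qed.

Lemma dist_pm_self (A : {set {set T}}) : is_pm A -> dist A A = nseq n 2.
Proof.
case/is_pm_involution=> a [aK a_neq ->].
have dist2 : all (pred1 2) (dist (pairing a) (pairing a)).
  apply/allP=> c; rewrite mem_sort => /mapP[_ /[!mem_enum] /imsetP[x _ ->] ->] /=.
  rewrite (card_component aK aK a_neq a_neq).
  have -> : order (rho a a) x = order id x.
    by apply: eq_card; apply: eq_fconnect => y; rewrite /rho aK.
  by rewrite order_id.
move/all_pred1P: dist2 (sumn_dist aK aK) => ->; rewrite sumn_nseq => sum2.
by congr nseq; apply: double_inj; rewrite -sum2 -muln2 mulnC.
Qed.

Lemma is_pm_orbit (A B A' B' : {set {set T}}) :
  is_pm A -> is_pm B -> is_pm A' -> is_pm B' -> dist A B = dist A' B' ->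
  exists G : {perm T}, mact G A = A' /\ mact G B = B'.
Proof.
move=> /is_pm_involution[a [aK a_neq ->]] /is_pm_involution[b [bK b_neq ->]].
move=> /is_pm_involution[a' [aK' a'_neq ->]] /is_pm_involution[b' [bK' b'_neq ->]].
case/(conj_pairings aK bK a_neq b_neq aK' bK' a'_neq b'_neq) => G [Ga Gb].
by exists G; rewrite (mact_pairing Ga) (mact_pairing Gb).
Qed.

End MatchingPairs.

Section Imatch.
Variable n : nat.
Local Notation T := 'I_(n.*2).

Lemma swap_halves_subproof (x : T) : (if x < n then x + n else x - n) < n.*2.
Proof. by have := ltn_ord x; case: ifP; lia. Qed.

Definition swap_halves (x : T) : T := Ordinal (swap_halves_subproof x).

Lemma swap_halvesK : involutive swap_halves.
Proof. by move=> x; apply: val_inj => /=; have := ltn_ord x; do 2 case: ifP; lia. Qed.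

Lemma swap_halves_neq x : swap_halves x != x.
Proof. by rewrite -val_eqE /=; have := ltn_ord x; case: ifP; lia. Qed.

Lemma Imatch_pairing : Imatch n = pairing swap_halves.
Proof.
apply/setP=> X; rewrite inE; apply/existsP/imsetP.
  case=> x /existsP[y /andP[/eqP yE /eqP ->]]; exists x => //.
  have {}yE : nat_of_ord y = x + n := yE.
  congr [set x; _]; apply: val_inj => /=; have := ltn_ord y; case: ifP; lia.
case=> x _ ->; have := ltn_ord x; case: (ltnP x n) => x_n x_lt.
  by exists x; apply/existsP; exists (swap_halves x); rewrite eqxx andbT /= x_n /= eqxx.
exists (swap_halves x); apply/existsP; exists x.
by rewrite setUC eqxx andbT /= ltnNge x_n /= subnK // eqxx.
Qed.

Lemma is_pm_Imatch : is_pm (Imatch n).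
Proof. by rewrite Imatch_pairing; apply: is_pm_pairing; [apply: swap_halvesK | apply: swap_halves_neq]. Qed.

Lemma card_transporters_dist mu (A B : {set {set T}}) tau :
  is_pm A -> is_pm B -> dist A B = dbl tau -> #|transporters mu A B| = mcount n mu tau.
Proof.
move=> pmA pmB dAB; rewrite /mcount; case: pickP => [A' /andP[pmA' /eqP dIA'] | none].
  have [G [GA GB]] := is_pm_orbit pmA pmB is_pm_Imatch pmA' (etrans dAB (esym dIA')).
  by rewrite -(card_transporters_mact mu G) GA GB.
have dAA : dist A A = dist (Imatch n) (Imatch n) by rewrite !dist_pm_self ?is_pm_Imatch.
have [G [GA _]] := is_pm_orbit pmA pmA is_pm_Imatch is_pm_Imatch dAA.
by have := none (mact G B); rewrite is_pm_mact // -GA dist_mact dAB eqxx.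
Qed.

End Imatch.

Local Open Scope ring_scope.

Lemma classsum_entry n mu i j :
  classsum n mu i j = #|transporters mu (val (enum_val i)) (val (enum_val j))|%:R.
Proof.
rewrite summxE (eq_bigr (fun s => (mact s (val (enum_val i)) == val (enum_val j))%:R)).
  rewrite -natr_sum -sum1_card; congr _%:R; rewrite [RHS]big_mkcond [LHS]big_mkcond /=.
  by apply: eq_bigr => s _; rewrite /transporters inE; do 2 case: (_ == _).
by move=> s _; rewrite mxE.
Qed.

Lemma classsum_sum_Nop n mu :
  classsum n mu = \sum_(tau <- parts n) (mcount n mu tau)%:R *: Nop n tau.
Proof.
apply/matrixP=> i j; set A := val (enum_val i); set B := val (enum_val j).
have [pmA pmB] : is_pm A /\ is_pm B by split; apply: valP.
have [tau tau_parts dAB] := dist_parts pmA pmB.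
rewrite classsum_entry -/A -/B (card_transporters_dist mu pmA pmB dAB) summxE.
rewrite (bigD1_seq tau) ?parts_uniq //= big1_seq => [|sigma /andP[sigma_tau _]].
  by rewrite addr0 !mxE -/A -/B dAB eqxx mulr1.
by rewrite !mxE -/A -/B dAB (inj_eq dbl_inj) eq_sym (negbTE sigma_tau) mulr0.
Qed.

Theorem lemma3p2 (n : nat) (mu : seq nat) :
  (1 <= n)%N -> is_partition n.*2 mu ->
  forall W : 'M[algC]_(dimM n), irr_submod W ->
  forall (phi : algC) (theta : seq nat -> algC),
    (forall v : 'rV[algC]_(dimM n), (v <= W)%MS -> v *m classsum n mu = phi *: v) ->
    (forall tau, tau \in parts n ->
       forall v : 'rV[algC]_(dimM n), (v <= W)%MS -> v *m Nop n tau = theta tau *: v) ->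
    phi = \sum_(tau <- parts n) (mcount n mu tau)%:R * theta tau.
Proof.
move=> _ _ W [W_neq0 _] phi theta W_phi W_theta.
have [v vW v_neq0] := rowV0Pn W_neq0.
suff : (phi - \sum_(tau <- parts n) (mcount n mu tau)%:R * theta tau) *: v = 0.
  by move/eqP; rewrite scaler_eq0 (negbTE v_neq0) orbF subr_eq0 => /eqP.
rewrite scalerBl -W_phi // classsum_sum_Nop mulmx_sumr scaler_suml.
apply/eqP; rewrite subr_eq0; apply/eqP/eq_big_seq.
by move=> tau tau_parts; rewrite -scalemxAr W_theta // scalerA.
Qed.
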